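(* Let $\mathfrak{n}\in A_+$ and $\gamma=\begin{pmatrix}a&b\\c&d\end{pmatrix}\in\mathrm{GL}_2(A)$. Then there exist $u\in K_\infty$ and $\gamma_0\in\Gamma_0(\mathfrak{n})$ such that $\gamma_0\gamma e_0=e_g$, where $$g=w_\mathfrak{n}\begin{pmatrix}\pi_\infty^{\deg\mathfrak{n}+2\delta_\mathfrak{n}(c,d)+\epsilon_\mathfrak{n}(c,d)}&u\\0&1\end{pmatrix}\begin{pmatrix}0&1\\\pi_\infty&0\end{pmatrix}^{\epsilon_\mathfrak{n}(c,d)},\qquad w_\mathfrak{n}=\begin{pmatrix}0&-1\\\mathfrak{n}&0\end{pmatrix}.$$
   Context: $\mathbb{F}_q$ a finite field, $A=\mathbb{F}_q[\theta]$, $A_+$ the monic polynomials, $\deg0=-\infty$; $\pi_\infty=\theta^{-1}$, $K_\infty=\mathbb{F}_q((\pi_\infty))$, $O_\infty=\mathbb{F}_q[[\pi_\infty]]$, $\mathcal{I}_\infty$ the matrices in $\mathrm{GL}_2(O_\infty)$ with lower-left entry in $\pi_\infty O_\infty$. Oriented edges of the Bruhat–Tits tree: cosets $\mathrm{GL}_2(K_\infty)/K_\infty^\times\mathcal{I}_\infty$, with $e_g$ the coset of $g$, left action of $\mathrm{GL}_2(K_\infty)$, and $e_0=e_I$. $\Gamma_0(\mathfrak{n})=\{\begin{pmatrix}a&b\\c&d\end{pmatrix}\in\mathrm{GL}_2(A):\mathfrak{n}\mid c\}$. For coprime $c,d\in A$ (as for the bottom row of $\gamma$), $\delta_\mathfrak{n}(c,d)=\min\{\max(\deg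 x,\deg y): x,y\in A,\ \gcd(cx+dy,\mathfrak{n})=1\}$, and $\epsilon_\mathfrak{n}(c,d)=0$ if there exist $x_0,y_0\in A$ with $\deg y_0<\deg x_0=\delta_\mathfrak{n}(c,d)$ and $\gcd(cx_0+dy_0,\mathfrak{n})=1$, and $\epsilon_\mathfrak{n}(c,d)=1$ otherwise. *)

(* Setting of Lemma 4.2: F = F_q a finite field, A = {poly F} = F_q[theta],
   K_inf = F_q((pi)) with pi = theta^-1, built here as the fraction field of the
   ring ps F of formal power series F[[pi]] (constructed below with full proofs). *)
From HB Require Import structures.
From mathcomp Require Import all_boot all_order all_algebra.
From mathcomp Require Import boolp classical_sets zify.
Set Implicit Arguments. Unset Strict Implicit. Unset Printing Implicit Defensive.
Import GRing.Theory.
Local Open Scope ring_scope.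

Definition ps (F : fieldType) : Type := nat -> F.
HB.instance Definition _ (F : fieldType) := Choice.on (ps F).

Definition ps_zero (F : fieldType) : ps F := fun _ => 0.
Definition ps_add (F : fieldType) (f g : ps F) : ps F := fun n => f n + g n.
Definition ps_opp (F : fieldType) (f : ps F) : ps F := fun n => - f n.

Lemma ps_addA F : associative (@ps_add F).
Proof. by move=> f g h; apply: funext => n; rewrite /ps_add addrA. Qed.
Lemma ps_addC F : commutative (@ps_add F).
Proof. by move=> f g; apply: funext => n; rewrite /ps_add addrC. Qed.
Lemma ps_add0 F : left_id (@ps_zero F) (@ps_add F).
Proof. by move=> f; apply: funext => n; rewrite /ps_add /ps_zero add0r. Qed.
Lemma ps_addN F : left_inverse (@ps_zero F) (@ps_opp F) (@ps_add F).
Proof. by move=> f; apply: funext => n; rewrite /ps_add /ps_opp /ps_zero addNr. Qed.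

HB.instance Definition _ (F : fieldType) :=
  GRing.isZmodule.Build (ps F) (@ps_addA F) (@ps_addC F) (@ps_add0 F) (@ps_addN F).

Definition ps_trunc (F : fieldType) (n : nat) (f : ps F) : {poly F} := \poly_(i < n) f i.

Definition ps_one (F : fieldType) : ps F := fun n => (n == 0%N)%:R.
Definition ps_mul (F : fieldType) (f g : ps F) : ps F :=
  fun n => (ps_trunc n.+1 f * ps_trunc n.+1 g)`_n.

Lemma coefM_take (F : fieldType) (p q : {poly F}) n m : (n < m)%N ->
  (p * q)`_n = (take_poly m p * take_poly m q)`_n.
Proof.
move=> lt_nm; rewrite !coefM; apply: eq_bigr => i _.
rewrite !coef_take_poly (leq_ltn_trans (leq_ord i) lt_nm).
by rewrite (leq_ltn_trans (leq_subr _ _) lt_nm).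
Qed.

Lemma ps_truncE (F : fieldType) n (f : ps F) i : (ps_trunc n f)`_i = if (i < n)%N then f i else 0.
Proof. by rewrite coef_poly. Qed.

Lemma ps_take_truncS (F : fieldType) k m (f : ps F) : (k <= m)%N ->
  take_poly k (ps_trunc m f) = ps_trunc k f.
Proof.
move=> le_km; apply/polyP => i; rewrite coef_take_poly !ps_truncE.
by case: ifP => // lt_i; rewrite (leq_trans lt_i le_km).
Qed.

Lemma ps_mulE (F : fieldType) (f g : ps F) n m : (n < m)%N ->
  ps_mul f g n = (ps_trunc m f * ps_trunc m g)`_n.
Proof.
move=> lt_nm; rewrite /ps_mul [RHS](coefM_take _ _ (ltnSn n)).
by rewrite !ps_take_truncS.
Qed.

Lemma ps_trunc_mul (F : fieldType) (f g : ps F) m :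
  ps_trunc m (ps_mul f g) = take_poly m (ps_trunc m f * ps_trunc m g).
Proof.
apply/polyP => i; rewrite ps_truncE coef_take_poly.
by case: ifP => // lt_im; apply: ps_mulE.
Qed.

Lemma ps_mulA F : associative (@ps_mul F).
Proof.
move=> f g h; apply: funext => n.
rewrite (ps_mulE _ _ (ltnSn n)) [RHS](ps_mulE _ _ (ltnSn n)) !ps_trunc_mul.
set tf := ps_trunc n.+1 f; set tg := ps_trunc n.+1 g; set th := ps_trunc n.+1 h.
have Th : take_poly n.+1 th = th by apply: take_poly_id; apply: size_poly.
have Tf : take_poly n.+1 tf = tf by apply: take_poly_id; apply: size_poly.
transitivity ((tf * tg * th)`_n).
  by rewrite -mulrA [RHS](coefM_take _ _ (ltnSn n)) Tf.
by rewrite [LHS](coefM_take _ _ (ltnSn n)) Th.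
Qed.

Lemma ps_mulC F : commutative (@ps_mul F).
Proof. by move=> f g; apply: funext => n; rewrite /ps_mul mulrC. Qed.

Lemma ps_trunc_one (F : fieldType) m : (0 < m)%N -> ps_trunc m (@ps_one F) = 1.
Proof.
move=> m0; apply/polyP => i; rewrite ps_truncE coef1 /ps_one.
case: ifP => // /negbT; rewrite -leqNgt => le_mi.
by rewrite gtn_eqF // (leq_trans m0 le_mi).
Qed.

Lemma ps_mul1 F : left_id (@ps_one F) (@ps_mul F).
Proof.
move=> f; apply: funext => n; rewrite /ps_mul ps_trunc_one // mul1r ps_truncE ltnSn //.
Qed.

Lemma ps_mulDl F : left_distributive (@ps_mul F) (@ps_add F).
Proof.
have T m (f g : ps F) : ps_trunc m (ps_add f g) = ps_trunc m f + ps_trunc m g.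
  by apply/polyP => i; rewrite coefD !ps_truncE; case: ifP; rewrite ?addr0.
by move=> f g h; apply: funext => n; rewrite /ps_mul T mulrDl coefD.
Qed.

Lemma ps_one_neq0 F : @ps_one F != 0.
Proof.
apply/eqP => /(congr1 (fun f : ps F => f 0%N)); rewrite /ps_one /=.
by move/eqP; rewrite oner_eq0.
Qed.

HB.instance Definition _ (F : fieldType) :=
  GRing.Zmodule_isComNzRing.Build (ps F) (@ps_mulA F) (@ps_mulC F)
    (@ps_mul1 F) (@ps_mulDl F) (@ps_one_neq0 F).

(* ps_invp f n is the truncation of degree n of the inverse of f     *)
Fixpoint ps_invp (F : fieldType) (f : ps F) (n : nat) : {poly F} :=
  match n with
  | 0%N => ((f 0%N)^-1)%:P
  | k.+1 => ps_invp f k +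
      (- (f 0%N)^-1 * (ps_trunc k.+2 f * ps_invp f k)`_k.+1) *: 'X^(k.+1)
  end.

Definition ps_inv (F : fieldType) (f : ps F) : ps F :=
  if f 0%N != 0 then (fun n => (ps_invp f n)`_n) else f.

Definition ps_unit (F : fieldType) : {pred ps F} := fun f => f 0%N != 0.

Lemma size_ps_invp (F : fieldType) (f : ps F) n : (size (ps_invp f n) <= n.+1)%N.
Proof.
elim: n => [|n IH] /=; first by rewrite size_polyC; case: (_ != 0).
rewrite (leq_trans (size_polyD _ _)) // geq_max (leq_trans IH) //.
by rewrite (leq_trans (size_scale_leq _ _)) // size_polyXn.
Qed.

Lemma coef_ps_invpS (F : fieldType) (f : ps F) n k : (k <= n)%N ->
  (ps_invp f n.+1)`_k = (ps_invp f n)`_k.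
Proof.
move=> le_kn /=; rewrite coefD coefZ coefXn.
by rewrite (ltn_eqF (leq_ltn_trans le_kn (ltnSn n))) mulr0 addr0.
Qed.

Lemma coef_ps_invp (F : fieldType) (f : ps F) n k : (k <= n)%N ->
  (ps_invp f n)`_k = (ps_invp f k)`_k.
Proof.
elim: n => [|n IH]; first by rewrite leqn0 => /eqP ->.
rewrite leq_eqVlt => /orP [/eqP -> //|]; rewrite ltnS => le_kn.
by rewrite coef_ps_invpS // IH.
Qed.

Lemma ps_invpP (F : fieldType) (f : ps F) n m k : f 0%N != 0 ->
  (k <= n)%N -> (n < m)%N -> (ps_trunc m f * ps_invp f n)`_k = (k == 0%N)%:R.
Proof.
move=> f0; elim: n m k => [|n IH] m k.
  rewrite leqn0 => /eqP -> m0 /=; rewrite coef0M ps_truncE m0 coefC /=.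
  by rewrite mulfV.
rewrite leq_eqVlt ltnS => /orP [/eqP ->|le_kn] lt_nm; last first.
  rewrite /= mulrDr coefD -scalerAr coefZ coefMXn ltnS le_kn mulr0 addr0.
  exact: IH m k le_kn (ltnW lt_nm).
rewrite /= mulrDr coefD -scalerAr coefZ coefMXn ltnn subnn ps_truncE.
rewrite (ltn_trans (ltn0Sn n) lt_nm) /=.
have -> : (ps_trunc m f * ps_invp f n)`_n.+1 = (ps_trunc n.+2 f * ps_invp f n)`_n.+1.
  rewrite (coefM_take _ _ (ltnSn n.+1)) ps_take_truncS //.
  by rewrite take_poly_id // (leq_trans (size_ps_invp f n)).
by rewrite mulNr (mulrC _ (f 0%N)) mulrN mulrA mulfV // mul1r subrr.
Qed.

Lemma ps_trunc_inv (F : fieldType) (f : ps F) n : f 0%N != 0 ->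
  ps_trunc n.+1 (ps_inv f) = ps_invp f n.
Proof.
move=> f0; apply/polyP => i; rewrite ps_truncE /ps_inv f0.
case: ifP => [lt_in|/negbT]; first by rewrite coef_ps_invp.
rewrite -leqNgt => le_ni.
by rewrite nth_default // (leq_trans (size_ps_invp f n)).
Qed.

Lemma ps_mulVx (F : fieldType) : {in @ps_unit F, left_inverse 1 (@ps_inv F) *%R}.
Proof.
move=> f f0; apply: funext => n; rewrite /GRing.mul /= /ps_mul ps_trunc_inv //.
by rewrite mulrC (ps_invpP f0 (leqnn n) (ltnSn n)).
Qed.

Lemma ps_unitPl (F : fieldType) (x y : ps F) : y * x = 1 -> ps_unit x.
Proof.
move=> /(congr1 (fun f : ps F => f 0%N)); rewrite /GRing.mul /= /ps_mul coef0M.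
rewrite !ps_truncE /= /ps_unit => yx; apply/eqP => x0; move: yx.
by rewrite x0 mulr0 /GRing.one /= /ps_one /= => /eqP; rewrite eq_sym oner_eq0.
Qed.

Lemma ps_invr_out (F : fieldType) : {in [predC @ps_unit F], @ps_inv F =1 id}.
Proof. by move=> f; rewrite inE /= unfold_in /ps_inv => /negbTE ->. Qed.

HB.instance Definition _ (F : fieldType) :=
  GRing.ComNzRing_hasMulInverse.Build (ps F) (@ps_mulVx F) (@ps_unitPl F) (@ps_invr_out F).

Lemma ps_neq0 (F : fieldType) (f : ps F) : f != 0 -> exists i, f i != 0.
Proof.
move=> f0; apply/not_existsP => H; move/eqP: f0; apply; apply: funext => i.
by apply/eqP; apply/negPn/negP => /(H i).
Qed.

Lemma ps_mulf_eq0 (F : fieldType) (x y : ps F) : x * y = 0 -> (x == 0) || (y == 0).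
Proof.
move=> xy0; apply/negPn/negP; rewrite negb_or => /andP [/ps_neq0 ex /ps_neq0 ey].
case: (ex_minnP ex) => i xi imin; case: (ex_minnP ey) => j yj jmin.
move: xy0 => /(congr1 (fun f : ps F => f (i + j)%N)).
rewrite /GRing.mul /= /ps_mul coefM.
have lt_i : (i < (i + j).+1)%N by rewrite ltnS leq_addr.
rewrite (bigD1 (Ordinal lt_i)) //= big1 ?addr0.
  rewrite !ps_truncE lt_i ltnS leq_subr addKn => /eqP; rewrite mulf_eq0.
  by rewrite (negPf xi) (negPf yj).
move=> k; rewrite -val_eqE /= => ki; rewrite !ps_truncE ltn_ord ltnS leq_subr.
case: (ltngtP k i) ki => // [lt_ki | lt_ik] _.
  have : x k == 0 by apply/negP => /negP /imin; rewrite leqNgt lt_ki.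
  by move/eqP ->; rewrite mul0r.
have : y (i + j - k)%N == 0.
  apply/negP => /negP /jmin; rewrite leqNgt => /negP; apply.
  by have := ltn_ord k; lia.
by move/eqP ->; rewrite mulr0.
Qed.

HB.instance Definition _ (F : fieldType) :=
  GRing.ComUnitRing_isIntegral.Build (ps F) (@ps_mulf_eq0 F).


Notation "x %:F" := (@FracField.tofrac _ x) : ring_scope.

Definition Kinf (F : fieldType) : fieldType := {fraction ps F}.

Definition ps_X (F : fieldType) : ps F := fun n => (n == 1%N)%:R.
Definition ps_const (F : fieldType) (c : F) : ps F := fun n => if n == 0%N then c else 0.

Definition pi_inf (F : fieldType) : Kinf F := (ps_X F)%:F.

Definition O_inf (F : fieldType) : set (Kinf F) := [set x | exists f : ps F, x = f%:F].

Definition A_to_K (F : fieldType) (p : {poly F}) : Kinf F :=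
  (map_poly (fun c : F => (ps_const c)%:F : Kinf F) p).[(pi_inf F)^-1].

Definition mx2 (R : Type) (a b c d : R) : 'M[R]_2 :=
  \matrix_(i < 2, j < 2) if i == 0 :> nat then (if j == 0 :> nat then a else b)
                          else (if j == 0 :> nat then c else d).

Definition Iwahori (F : fieldType) : set 'M[Kinf F]_2 :=
  [set k : 'M[Kinf F]_2 | (forall i j, @O_inf F (k i j)) /\
           (exists k' : 'M[Kinf F]_2, (forall i j, @O_inf F (k' i j)) /\ k *m k' = 1%:M) /\
           (exists x : Kinf F, @O_inf F x /\ k 1 0 = pi_inf F * x)].

Definition KI (F : fieldType) : set 'M[Kinf F]_2 :=
  [set M | exists lam : Kinf F, exists k : 'M[Kinf F]_2, lam != 0 /\ @Iwahori F k /\ M = lam *: k].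

(* oriented edges of the Bruhat-Tits tree: cosets g K_inf^x I_inf *)
Definition edge (F : fieldType) (g : 'M[Kinf F]_2) : set 'M[Kinf F]_2 :=
  (fun M => g *m M) @` @KI F.

Definition e0 (F : fieldType) : set 'M[Kinf F]_2 := edge 1%:M.

Definition act (F : fieldType) (h : 'M[Kinf F]_2) (E : set 'M[Kinf F]_2) : set 'M[Kinf F]_2 :=
  (fun M => h *m M) @` E.

Definition Gamma0 (F : fieldType) (n : {poly F}) : set 'M[{poly F}]_2 :=
  [set g | g \in unitmx /\ n %| g 1 0].

(* deg, with deg 0 = -oo handled by callers *)
Definition degp (F : fieldType) (p : {poly F}) : nat := (size p).-1.

Definition delta_cand (F : fieldType) (n c d : {poly F}) (N : nat) : Prop :=
  exists x y : {poly F}, ((x != 0) || (y != 0)) /\ maxn (size x) (size y) = N.+1 /\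
                         coprimep (c * x + d * y) n.

Definition is_delta (F : fieldType) (n c d : {poly F}) (N : nat) : Prop :=
  delta_cand n c d N /\ forall M, delta_cand n c d M -> (N <= M)%N.

Definition eps (F : fieldType) (n c d : {poly F}) (delta : nat) : nat :=
  if `[< exists x0 y0 : {poly F}, size x0 = delta.+1 /\ (size y0 <= delta)%N /\
                                  coprimep (c * x0 + d * y0) n >] then 0%N else 1%N.

Definition w_mat (F : fieldType) (n : {poly F}) : 'M[Kinf F]_2 := mx2 0 (-1) (A_to_K n) 0.

(* Pick (x, y) realising delta = delta_n(c, d), with deg x = delta if eps = 0 and
   deg y = delta if eps = 1; minimality of delta forces gcd(x, y) = 1.  The row
   (p, q) = (y, -x) gamma^-1 is primitive with p = det(gamma)^-1 (c x + d y) prime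
   to n, so Bezout for p and n q completes it to some gamma0 in Gamma_0(n), and
   gamma0 gamma has top row (y, -x).  This matrix factors explicitly as g (l k)
   with l a scalar and k an upper (eps = 1) or lower (eps = 0) triangular element
   of the Iwahori subgroup: the entries of k are built from y pi^delta, x pi^delta,
   n pi^(deg n) and the constant det(gamma0 gamma), whose valuations at infinity
   are read off from the degrees. *)

From HB Require Import structures.
From mathcomp Require Import all_boot all_order all_algebra.
From mathcomp Require Import boolp classical_sets.
From mathcomp Require Import ring zify.
Import GRing.Theory.
Set Implicit Arguments. Unset Strict Implicit. Unset Printing Implicit Defensive.
Local Open Scope ring_scope.

Section PowerSeries.
Variable F : fieldType.

Lemma ps_mul_coef0 (f g : ps F) : (f * g) 0%N = f 0%N * g 0%N.
Proof. by rewrite /GRing.mul /= /ps_mul coef0M !ps_truncE. Qed.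

Lemma ps_trunc_const (c : F) m : ps_trunc m.+1 (ps_const c) = c%:P.
Proof. by apply/polyP => -[|i]; rewrite ps_truncE coefC //=; case: ifP. Qed.

Lemma ps_const_is_zmod_morphism : zmod_morphism (@ps_const F).
Proof.
move=> a b; apply: funext => -[|i] //=.
by rewrite /ps_const /GRing.add /GRing.opp /= /ps_add /ps_opp /= subr0.
Qed.

Lemma ps_const_is_monoid_morphism : monoid_morphism (@ps_const F).
Proof.
split; first by apply: funext => -[|i].
move=> a b; apply: funext => i.
by rewrite /GRing.mul /= /ps_mul !ps_trunc_const -polyCM coefC.
Qed.

HB.instance Definition _ :=
  GRing.isZmodMorphism.Build F (ps F) (@ps_const F) ps_const_is_zmod_morphism.
HB.instance Definition _ :=
  GRing.isMonoidMorphism.Build F (ps F) (@ps_const F) ps_const_is_monoid_morphism.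

Definition const_K : {rmorphism F -> Kinf F} :=
  (@FracField.tofrac (ps F)) \o (@ps_const F).

Lemma const_K_comm : commr_rmorph const_K (pi_inf F)^-1.
Proof. by move=> x; rewrite /GRing.comm mulrC. Qed.

HB.instance Definition _ :=
  GRing.RMorphism.copy (@A_to_K F) (horner_morph const_K_comm).

Lemma A_to_KC (c : F) : A_to_K c%:P = const_K c.
Proof. exact: (horner_morphC const_K_comm). Qed.

Lemma A_to_KX : A_to_K 'X = (pi_inf F)^-1.
Proof. exact: (horner_morphX const_K_comm). Qed.

End PowerSeries.

Arguments const_K {F}.

Section IntegralElements.
Variable F : fieldType.
Local Notation pi := (pi_inf F).
Local Notation O_inf := (@O_inf F).
Implicit Types (x y : Kinf F) (p : {poly F}).

Definition O_inf_unit x := exists f : ps F, x = f%:F /\ f 0%N != 0.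

Lemma O_infD x y : O_inf x -> O_inf y -> O_inf (x + y).
Proof. by move=> [f ->] [g ->]; exists (f + g); rewrite rmorphD. Qed.
Lemma O_infM x y : O_inf x -> O_inf y -> O_inf (x * y).
Proof. by move=> [f ->] [g ->]; exists (f * g); rewrite rmorphM. Qed.
Lemma O_infN x : O_inf x -> O_inf (- x).
Proof. by move=> [f ->]; exists (- f); rewrite rmorphN. Qed.
Lemma O_inf0 : O_inf 0.
Proof. by exists 0; rewrite rmorph0. Qed.
Lemma O_inf1 : O_inf 1.
Proof. by exists 1; rewrite rmorph1. Qed.
Lemma O_inf_pi : O_inf pi.
Proof. by exists (ps_X F). Qed.

Lemma O_inf_unitW x : O_inf_unit x -> O_inf x.
Proof. by move=> [f [-> _]]; exists f. Qed.

Lemma O_inf_unitM x y : O_inf_unit x -> O_inf_unit y -> O_inf_unit (x * y).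
Proof.
move=> [f [-> f0]] [g [-> g0]]; exists (f * g).
by rewrite rmorphM ps_mul_coef0 mulf_neq0.
Qed.

Lemma O_inf_unitV x : O_inf_unit x -> O_inf_unit x^-1.
Proof.
move=> [f [-> f0]]; have f_unit : f \is a GRing.unit by [].
exists f^-1; split; first by rewrite rmorphV.
apply/eqP => inv0; have := congr1 (fun g : ps F => g 0%N) (mulVr f_unit).
rewrite /= ps_mul_coef0 inv0 mul0r /GRing.one /= /ps_one /=.
by move/eqP; rewrite eq_sym oner_eq0.
Qed.

Lemma O_inf_unitN x : O_inf_unit x -> O_inf_unit (- x).
Proof.
move=> [f [-> f0]]; exists (- f).
by rewrite rmorphN /GRing.opp /= /ps_opp oppr_eq0.
Qed.

Lemma O_inf_unit_neq0 x : O_inf_unit x -> x != 0.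
Proof. by move=> [f [-> f0]]; rewrite tofrac_eq0; apply: contraNneq f0 => ->. Qed.

Lemma O_inf_unit_const (c : F) : c != 0 -> O_inf_unit (const_K c).
Proof. by exists (@ps_const F c). Qed.

Lemma O_inf_unit_neq0l x y : O_inf_unit (x * y) -> x != 0.
Proof. by move/O_inf_unit_neq0; apply: contraNneq => ->; rewrite mul0r. Qed.

Lemma O_inf_div x y : O_inf x -> O_inf_unit y -> O_inf (x / y).
Proof. by move=> Ox /O_inf_unitV/O_inf_unitW; apply: O_infM. Qed.

Lemma pi_neq0 : pi != 0.
Proof.
rewrite tofrac_eq0; apply: contra_neq (@oner_neq0 F) => /(congr1 (fun f => f 1%N)).
by rewrite /ps_X.
Qed.

Lemma pi_exp_neq0 m : pi ^+ m != 0.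
Proof. by rewrite expf_neq0 ?pi_neq0. Qed.

Lemma A_to_K_pi_exp p m : (size p <= m.+1)%N ->
  exists f : ps F, A_to_K p * pi ^+ m = f%:F /\ f 0%N = p`_m.
Proof.
elim: m p => [|m IH] p size_p.
  by exists (ps_const p`_0); rewrite (size1_polyC size_p) A_to_KC mulr1 coefC.
have [|f [def_f f0]] := IH (drop_poly 1 p); first by rewrite size_drop_poly; lia.
have -> : p = drop_poly 1 p * 'X + (p`_0)%:P.
  by apply/polyP => -[|i]; rewrite coefD coefMX coefC coef_drop_poly ?addn1 ?add0r ?addr0.
exists (ps_const p`_0 * ps_X F ^+ m.+1 + f); split.
  rewrite !rmorphD !rmorphM rmorphXn /= A_to_KC A_to_KX -def_f.
  by rewrite mulrDl addrC exprS [X in _ + X]mulrA divfK ?pi_neq0.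
rewrite /GRing.add /= /ps_add ps_mul_coef0 exprS ps_mul_coef0 /ps_X /= mul0r mulr0 add0r.
by rewrite f0 coefD coefMX coefC coef_drop_poly addn1 addr0.
Qed.

Lemma O_inf_A_to_K_pi_exp p m : (size p <= m.+1)%N -> O_inf (A_to_K p * pi ^+ m).
Proof. by case/A_to_K_pi_exp => f [-> _]; exists f. Qed.

Lemma O_inf_unit_A_to_K_pi_exp p m : size p = m.+1 -> O_inf_unit (A_to_K p * pi ^+ m).
Proof.
move=> size_p; have [f [-> f0]] := A_to_K_pi_exp (eq_leq size_p).
exists f; split => //; rewrite f0.
by rewrite -[m]/(m.+1.-1) -size_p -lead_coefE lead_coef_eq0 -size_poly_gt0 size_p.
Qed.

Lemma A_to_K_pi_exp_pi_multiple p m : (size p <= m)%N ->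
  exists2 w, O_inf w & A_to_K p * pi ^+ m = pi * w.
Proof.
case: m => [|m] size_p.
  move/size_poly_leq0P: size_p => ->.
  by exists 0; [exact: O_inf0 | rewrite rmorph0 mul0r mulr0].
by exists (A_to_K p * pi ^+ m); [exact: O_inf_A_to_K_pi_exp | rewrite exprS mulrCA].
Qed.

Lemma unitmx_poly_det m (G : 'M[{poly F}]_m) : G \in unitmx ->
  exists2 c : F, c != 0 & \det G = c%:P.
Proof.
rewrite unitmxE poly_unitE => /andP[/eqP size_det unit_det].
by exists (\det G)`_0; [rewrite -unitfE | apply: size1_polyC; rewrite size_det].
Qed.

Lemma O_inf_unit_A_to_K_det m (G : 'M[{poly F}]_m) : G \in unitmx ->
  O_inf_unit (A_to_K (\det G)).
Proof. by case/unitmx_poly_det => c c0 ->; rewrite A_to_KC; apply: O_inf_unit_const. Qed.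

End IntegralElements.

Arguments O_inf0 {F}.
Arguments O_inf1 {F}.
Arguments O_inf_pi {F}.
Arguments pi_neq0 {F}.
Arguments pi_exp_neq0 {F}.

Section TwoByTwo.

Lemma mx2_entries (R : Type) (A : 'M[R]_2) : A = mx2 (A 0 0) (A 0 1) (A 1 0) (A 1 1).
Proof.
apply/matrixP => i j; rewrite mxE.
by case: i => [[|[|//]] ?]; case: j => [[|[|//]] ?] /=; congr (A _ _); apply/val_inj.
Qed.

Lemma map_mx2 (R S : Type) (f : R -> S) (a b c d : R) :
  map_mx f (mx2 a b c d) = mx2 (f a) (f b) (f c) (f d).
Proof. by apply/matrixP => i j; rewrite !mxE; case: ifP; case: ifP. Qed.

Variable R : pzRingType.
Implicit Types a b c d l : R.

Lemma mulmx2E (A B : 'M[R]_2) i j : (A *m B) i j = A i 0 * B 0 j + A i 1 * B 1 j.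
Proof.
by rewrite mxE big_ord_recl big_ord1; congr (_ + A i _ * B _ j); apply/val_inj.
Qed.

Lemma mul_mx2 a b c d a' b' c' d' :
  mx2 a b c d *m mx2 a' b' c' d' =
  mx2 (a * a' + b * c') (a * b' + b * d') (c * a' + d * c') (c * b' + d * d').
Proof. by rewrite [LHS]mx2_entries !mulmx2E !mxE. Qed.

Lemma scale_mx2 l a b c d : l *: mx2 a b c d = mx2 (l * a) (l * b) (l * c) (l * d).
Proof. by rewrite [LHS]mx2_entries !mxE. Qed.

Lemma mx2_one : 1%:M = mx2 (1 : R) 0 0 1.
Proof. by rewrite [LHS]mx2_entries !mxE. Qed.

End TwoByTwo.

Lemma det_mx2 (R : comPzRingType) (a b c d : R) : \det (mx2 a b c d) = a * d - b * c.
Proof.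
rewrite (expand_det_row _ 0) big_ord_recl big_ord1 /cofactor !det_mx11 !mxE /=.
by rewrite expr0 expr1 !mul1r mulN1r mulrN.
Qed.

Lemma mx2_lower_mulV (K : fieldType) (k c : K) : k != 0 ->
  mx2 k 0 c 1 *m mx2 k^-1 0 (- c / k) 1 = 1%:M.
Proof. by move=> k0; rewrite mul_mx2 mx2_one; congr mx2; field. Qed.

Lemma mx2_upper_mulV (K : fieldType) (t s : K) : s != 0 ->
  mx2 1 t 0 s *m mx2 1 (- t / s) 0 s^-1 = 1%:M.
Proof. by move=> s0; rewrite mul_mx2 mx2_one; congr mx2; field. Qed.

Section Factorization.
Variables (K : fieldType) (N P al be ga de : K).

Lemma mx2_factor_lower : N != 0 -> P != 0 -> be != 0 ->
  mx2 al be ga de = mx2 0 (-1) N 0 *m mx2 P (- de / (N * be)) 0 1 *m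
    ((- be) *: mx2 ((al * de - be * ga) / (N * be ^+ 2 * P)) 0 (al / be) 1).
Proof.
by move=> N0 P0 be0; rewrite scale_mx2 !mul_mx2; f_equal; field; rewrite ?N0 ?P0 ?be0.
Qed.

Lemma mx2_factor_upper p : N != 0 -> P != 0 -> p != 0 -> al != 0 ->
  mx2 al be ga de =
  mx2 0 (-1) N 0 *m mx2 (P * p) (- ga / (N * al)) 0 1 *m mx2 0 1 p 0 *m
    ((- al / p) *: mx2 1 (be / al) 0 ((be * ga - al * de) / (N * al ^+ 2 * P))).
Proof.
move=> N0 P0 p0 al0; rewrite scale_mx2 !mul_mx2.
by f_equal; field; rewrite ?N0 ?P0 ?p0 ?al0.
Qed.

End Factorization.

Section BruhatTitsEdges.
Variable F : fieldType.
Local Notation pi := (pi_inf F).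
Local Notation O_inf := (@O_inf F).
Local Notation KI := (@KI F).
Implicit Types (g h M : 'M[Kinf F]_2) (l k t s w : Kinf F).

Lemma mx2_O_inf a b c d : O_inf a -> O_inf b -> O_inf c -> O_inf d ->
  forall i j, O_inf (mx2 a b c d i j).
Proof. by move=> Oa Ob Oc Od i j; rewrite mxE; case: ifP; case: ifP. Qed.

Lemma Iwahori_mul M M' : Iwahori M -> Iwahori M' -> Iwahori (M *m M').
Proof.
move=> [OM [[N [ON MN]] [x [Ox Mx]]]] [OM' [[N' [ON' MN']] [x' [Ox' Mx']]]].
have O_mul (A B : 'M[Kinf F]_2) : (forall i j, O_inf (A i j)) ->
    (forall i j, O_inf (B i j)) -> forall i j, O_inf ((A *m B) i j).
  by move=> OA OB i j; rewrite mulmx2E; apply: O_infD; apply: O_infM.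
split; first exact: O_mul.
split.
  by exists (N' *m N); split; [exact: O_mul | rewrite mulmxA -(mulmxA M) MN' mulmx1].
exists (x * M' 0 0 + M 1 1 * x'); split; first by apply: O_infD; apply: O_infM.
by rewrite mulmx2E Mx Mx' mulrDr !mulrA (mulrC (M 1 1)).
Qed.

Lemma KI_mul M M' : KI M -> KI M' -> KI (M *m M').
Proof.
move=> [l [K [l0 [IK ->]]]] [l' [K' [l'0 [IK' ->]]]].
exists (l * l'), (K *m K'); split; first by rewrite mulf_neq0.
split; first exact: Iwahori_mul.
by rewrite -scalemxAr -scalemxAl scalerA mulrC.
Qed.

Lemma act_edge h g : act h (edge g) = edge (h *m g).
Proof.
by rewrite /act /edge image_comp; congr image; apply: funext => M /=; rewrite mulmxA.
Qed.

Lemma act_e0 h : act h (@e0 F) = edge h.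
Proof. by rewrite act_edge mulmx1. Qed.

Lemma edge_mulr g M M' : KI M -> KI M' -> M *m M' = 1%:M -> edge (g *m M) = edge g.
Proof.
move=> KIM KIM' MM'; apply/seteqP; split => _ [P KIP <-].
  by exists (M *m P); [exact: KI_mul | rewrite mulmxA].
by exists (M' *m P); [exact: KI_mul | rewrite mulmxA -(mulmxA g) MM' mulmx1].
Qed.

Lemma Iwahori_lower k w : O_inf_unit k -> O_inf w -> Iwahori (mx2 k 0 (pi * w) 1).
Proof.
move=> Uk Ow; have k0 := O_inf_unit_neq0 Uk.
split.
  apply: mx2_O_inf; [exact: O_inf_unitW Uk | exact: O_inf0 | | exact: O_inf1].
  exact: O_infM O_inf_pi Ow.
split; last by exists w; rewrite mxE.
exists (mx2 k^-1 0 (- (pi * w) / k) 1); split; last exact: mx2_lower_mulV.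
apply: mx2_O_inf; [exact/O_inf_unitW/O_inf_unitV/Uk | exact: O_inf0 | | exact: O_inf1].
exact: O_inf_div (O_infN (O_infM O_inf_pi Ow)) Uk.
Qed.

Lemma Iwahori_upper t s : O_inf t -> O_inf_unit s -> Iwahori (mx2 1 t 0 s).
Proof.
move=> Ot Us; have s0 := O_inf_unit_neq0 Us.
split.
  by apply: mx2_O_inf; [exact: O_inf1 | exact: Ot | exact: O_inf0 | exact: O_inf_unitW Us].
split; last by exists 0; rewrite mxE mulr0; split; first exact: O_inf0.
exists (mx2 1 (- t / s) 0 s^-1); split; last exact: mx2_upper_mulV.
apply: mx2_O_inf; [exact: O_inf1 | exact: O_inf_div (O_infN Ot) Us | exact: O_inf0 |].
exact/O_inf_unitW/O_inf_unitV/Us.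
Qed.

Lemma scale_mulmxV l M M' : l != 0 -> (l *: M) *m (l^-1 *: M') = M *m M'.
Proof. by move=> l0; rewrite -scalemxAl -scalemxAr scalerA mulfV // scale1r. Qed.

Lemma edge_mul_lower g l k w : l != 0 -> O_inf_unit k -> O_inf w ->
  edge (g *m (l *: mx2 k 0 (pi * w) 1)) = edge g.
Proof.
move=> l0 Uk Ow; have k0 := O_inf_unit_neq0 Uk.
apply: (@edge_mulr g _ (l^-1 *: mx2 k^-1 0 (pi * (- w / k)) 1)).
- by exists l, (mx2 k 0 (pi * w) 1); split; [| split; first exact: Iwahori_lower].
- exists l^-1, (mx2 k^-1 0 (pi * (- w / k)) 1); split; first by rewrite invr_eq0.
  split => //; apply: Iwahori_lower; first exact: O_inf_unitV.
  exact: O_inf_div (O_infN Ow) Uk.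
- by rewrite scale_mulmxV // mulrA mulrN mx2_lower_mulV.
Qed.

Lemma edge_mul_upper g l t s : l != 0 -> O_inf t -> O_inf_unit s ->
  edge (g *m (l *: mx2 1 t 0 s)) = edge g.
Proof.
move=> l0 Ot Us; have s0 := O_inf_unit_neq0 Us.
apply: (@edge_mulr g _ (l^-1 *: mx2 1 (- t / s) 0 s^-1)).
- by exists l, (mx2 1 t 0 s); split; [| split; first exact: Iwahori_upper].
- exists l^-1, (mx2 1 (- t / s) 0 s^-1); split; first by rewrite invr_eq0.
  split => //; apply: Iwahori_upper; last exact: O_inf_unitV.
  exact: O_inf_div (O_infN Ot) Us.
- by rewrite scale_mulmxV // mx2_upper_mulV.
Qed.

End BruhatTitsEdges.

Section PolynomialPairs.
Variable F : fieldType.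
Implicit Types n c d x y : {poly F}.

Lemma is_delta_coprimep n c d delta x y : is_delta n c d delta ->
  maxn (size x) (size y) = delta.+1 -> coprimep (c * x + d * y) n -> coprimep x y.
Proof.
move=> [_ delta_min] size_xy cop; set g := gcdp x y.
have g0 : g != 0.
  rewrite gcdp_eq0; apply: contraTN isT => /andP[/eqP x0 /eqP y0].
  by move: size_xy; rewrite x0 y0 size_poly0.
have size_g : (0 < size g)%N by rewrite size_poly_gt0.
have [def_x def_y] : x = x %/ g * g /\ y = y %/ g * g.
  by rewrite !divpK ?dvdp_gcdl ?dvdp_gcdr.
have size_x1 := size_divp x g0; have size_y1 := size_divp y g0.
set x1 := x %/ g in def_x size_x1; set y1 := y %/ g in def_y size_y1.
have size_xy1 : (0 < maxn (size x1) (size y1))%N.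
  rewrite leq_max !size_poly_gt0 -negb_and; apply: contraTN isT => /andP[/eqP x0 /eqP y0].
  by move: size_xy; rewrite def_x def_y x0 y0 !mul0r size_poly0.
have cand : delta_cand n c d (maxn (size x1) (size y1)).-1.
  exists x1, y1; split; last split; last first.
  - by apply: coprimep_dvdr cop; rewrite def_x def_y !mulrA -mulrDl dvdp_mulIl.
  - by rewrite prednK.
  - by rewrite -!size_poly_gt0 -leq_max.
have := delta_min _ cand.
rewrite size_x1 size_y1 in size_xy1 *; rewrite coprimep_def.
move: size_xy size_g size_xy1; move: (size x) (size y) (size g) => a b s *.
by apply/eqP; lia.
Qed.

Lemma Gamma0_with_top_row n (gam : 'M[{poly F}]_2) x y :
  gam \in unitmx -> coprimep x y -> coprimep (gam 1 0 * x + gam 1 1 * y) n ->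
  exists2 g0, Gamma0 n g0 & exists c d, g0 *m gam = mx2 y (- x) c d.
Proof.
move=> /unitmx_poly_det[D D0 det_gam] cop_xy cop.
rewrite [gam]mx2_entries det_mx2 in det_gam *.
move: (gam 0 0) (gam 0 1) (gam 1 0) (gam 1 1) det_gam cop => a b c d det_gam cop.
set p : {poly F} := D^-1 *: (c * x + d * y).
set q : {poly F} := - (D^-1 *: (a * x + b * y)).
have invD : D^-1%:P * (a * d - b * c) = 1 by rewrite det_gam -polyCM mulVf.
have row_a : p * a + q * c = y.
  transitivity (D^-1%:P * (a * d - b * c) * y); last by rewrite invD mul1r.
  by rewrite /p /q -!mul_polyC; ring.
have row_b : p * b + q * d = - x.
  transitivity (- (D^-1%:P * (a * d - b * c) * x)); last by rewrite invD mul1r.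
  by rewrite /p /q -!mul_polyC; ring.
have cop_pq : coprimep p q.
  apply/coprimepP => e ep eq; move/coprimepP: cop_xy; apply.
    by rewrite -dvdpNr -row_b dvdp_add ?dvdp_mulr.
  by rewrite -row_a dvdp_add ?dvdp_mulr.
have : coprimep p (n * q) by rewrite coprimepMr cop_pq andbT coprimepZl ?invr_eq0.
case/Bezout_eq1_coprimepP => -[u v] /= bezout.
exists (mx2 p q (- (n * v)) u); last by rewrite mul_mx2 row_a row_b; do 2!eexists.
split; last by rewrite mxE /= dvdpNr dvdp_mulIl.
have det_g0 : p * u - q * - (n * v) = u * p + v * (n * q) by ring.
by rewrite unitmxE det_mx2 det_g0 bezout unitr1.
Qed.

Lemma Gamma0_mul_unitmx n g0 (gam : 'M[{poly F}]_2) :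
  Gamma0 n g0 -> gam \in unitmx -> g0 *m gam \in unitmx.
Proof. by case=> g0_unit _ gam_unit; rewrite unitmx_mul g0_unit. Qed.

End PolynomialPairs.

Section TopRow.
Variables (F : fieldType) (n : {poly F}).
Hypothesis n_monic : n \is monic.
Local Notation pi := (pi_inf F).
Local Notation N := (A_to_K n).

Lemma O_inf_unit_A_to_K_monic : O_inf_unit (N * pi ^+ degp n).
Proof.
by apply: O_inf_unit_A_to_K_pi_exp; rewrite prednK // size_poly_gt0 monic_neq0.
Qed.

Lemma A_to_K_monic_neq0 : N != 0.
Proof. exact: O_inf_unit_neq0l O_inf_unit_A_to_K_monic. Qed.

Lemma edge_top_row_lower (a b c d : {poly F}) delta :
  mx2 a b c d \in unitmx -> (size a <= delta)%N -> size b = delta.+1 ->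
  exists u, act (map_mx (@A_to_K F) (mx2 a b c d)) (@e0 F) =
            edge (w_mat n *m mx2 (pi ^+ (degp n + 2 * delta)%N) u 0 1).
Proof.
move=> G_unit size_a size_b.
have [w Ow def_w] := A_to_K_pi_exp_pi_multiple size_a.
have Ub := O_inf_unit_A_to_K_pi_exp size_b.
have := O_inf_unit_A_to_K_det G_unit; rewrite det_mx2 rmorphB !rmorphM /= => UD.
have be0 := O_inf_unit_neq0l Ub.
exists (- A_to_K d / (N * A_to_K b)).
rewrite act_e0 map_mx2.
rewrite (mx2_factor_lower _ _ _ A_to_K_monic_neq0 (pi_exp_neq0 (degp n + 2 * delta)) be0).
have -> : A_to_K a / A_to_K b = pi * (w / (A_to_K b * pi ^+ delta)).
  by rewrite mulrA -def_w -[LHS]mulr1 -(divff (pi_exp_neq0 delta)) mulf_div.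
rewrite edge_mul_lower ?oppr_eq0 //; last exact: O_inf_div Ow Ub.
have -> : N * A_to_K b ^+ 2 * pi ^+ (degp n + 2 * delta) =
          N * pi ^+ degp n * ((A_to_K b * pi ^+ delta) * (A_to_K b * pi ^+ delta)).
  by rewrite -expr2 exprMn -exprM mulrACA -exprD mulnC.
apply: O_inf_unitM UD (O_inf_unitV (O_inf_unitM O_inf_unit_A_to_K_monic _)).
exact: (O_inf_unitM Ub Ub).
Qed.

Lemma edge_top_row_upper (a b c d : {poly F}) delta :
  mx2 a b c d \in unitmx -> size a = delta.+1 -> (size b <= delta.+1)%N ->
  exists u, act (map_mx (@A_to_K F) (mx2 a b c d)) (@e0 F) =
            edge (w_mat n *m mx2 (pi ^+ (degp n + 2 * delta + 1)%N) u 0 1 *m mx2 0 1 pi 0).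
Proof.
move=> G_unit size_a size_b.
have Ua := O_inf_unit_A_to_K_pi_exp size_a.
have Ob := O_inf_A_to_K_pi_exp size_b.
have := O_inf_unit_A_to_K_det G_unit; rewrite det_mx2 rmorphB !rmorphM /= => UD.
have al0 := O_inf_unit_neq0l Ua.
exists (- A_to_K c / (N * A_to_K a)).
rewrite act_e0 map_mx2 addn1 exprSr.
rewrite (mx2_factor_upper _ _ _ A_to_K_monic_neq0 (pi_exp_neq0 (degp n + 2 * delta))
  pi_neq0 al0).
have -> : A_to_K b / A_to_K a = (A_to_K b * pi ^+ delta) / (A_to_K a * pi ^+ delta).
  by rewrite -[LHS]mulr1 -(divff (pi_exp_neq0 delta)) mulf_div.
rewrite edge_mul_upper //; first by rewrite mulf_neq0 ?oppr_eq0 ?invr_eq0 ?pi_neq0.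
  exact: O_inf_div Ob Ua.
have -> : N * A_to_K a ^+ 2 * pi ^+ (degp n + 2 * delta) =
          N * pi ^+ degp n * ((A_to_K a * pi ^+ delta) * (A_to_K a * pi ^+ delta)).
  by rewrite -expr2 exprMn -exprM mulrACA -exprD mulnC.
rewrite -opprB mulNr; apply: O_inf_unitN.
apply: O_inf_unitM UD (O_inf_unitV (O_inf_unitM O_inf_unit_A_to_K_monic _)).
exact: (O_inf_unitM Ua Ua).
Qed.

End TopRow.

Theorem lemma4p2 (F : finFieldType) (n : {poly F}) (gamma : 'M[{poly F}]_2)
    (delta : nat) :
  n \is monic -> gamma \in unitmx ->
  is_delta n (gamma 1 0) (gamma 1 1) delta ->
  let e := eps n (gamma 1 0) (gamma 1 1) delta in
  exists (u : Kinf F) (gamma0 : 'M[{poly F}]_2),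
    Gamma0 n gamma0 /\
    act (map_mx (@A_to_K F) (gamma0 *m gamma)) (@e0 F) =
    edge (w_mat n *m mx2 (pi_inf F ^+ (degp n + 2 * delta + e)%N) u 0 1
                 *m mx2 0 1 (pi_inf F) 0 ^+ e).
Proof.
move=> n_monic gamma_unit hdelta e.
rewrite /e /eps; case: asboolP => [[x [y [size_x [size_y cop]]]] | not_eps0].
  have size_xy : maxn (size x) (size y) = delta.+1 by rewrite size_x; lia.
  have [g0 g0_Gamma0 [c [d def_G]]] :=
    Gamma0_with_top_row gamma_unit (is_delta_coprimep hdelta size_xy cop) cop.
  have := Gamma0_mul_unitmx g0_Gamma0 gamma_unit; rewrite def_G => G_unit.
  have [|u edge_G] := edge_top_row_lower n_monic G_unit size_y; first by rewrite size_opp.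
  by exists u, g0; rewrite def_G edge_G addn0 expr0 mulmx1.
have [[x [y [_ [size_xy cop]]]] _] := hdelta.
have size_y : size y = delta.+1.
  case: (leqP (size y) delta) => [le_y | ]; last by move: size_xy; lia.
  by case: not_eps0; exists x, y; split => //; move: size_xy le_y; lia.
have [g0 g0_Gamma0 [c [d def_G]]] :=
  Gamma0_with_top_row gamma_unit (is_delta_coprimep hdelta size_xy cop) cop.
have := Gamma0_mul_unitmx g0_Gamma0 gamma_unit; rewrite def_G => G_unit.
have [|u edge_G] := edge_top_row_upper n_monic G_unit size_y.
  by rewrite size_opp -size_xy leq_maxl.
by exists u, g0; rewrite def_G edge_G expr1.
Qed.
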